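(* There is a constant $C$ such that for every regular unary language $L\subseteq\{a\}^*$, $\mathrm{nsyn}(L)\le C\cdot\mathrm{ns}(L)^2$.
   Context: $\mathrm{ns}(L)$ is the least number of states of an nfa (several initial states allowed) accepting $L$. $\mathrm{nsyn}(L)$ (nondeterministic syntactic complexity) is the least number of states of a subatomic nfa accepting $L$, i.e. an nfa every state of which accepts a language in the boolean subalgebra of $\mathcal{P}(\Sigma^* )$ generated by the two-sided derivatives $u^{-1}Lv^{-1}=\{w:uwv\in L\}$; equivalently, the least degree $|J(S)|$ of a boolean representation $\mathrm{Syn}(L)\to\mathbf{JSL}(S,S)$ extending the canonical representation $[w]_L\mapsto(K\mapsto w^{-1}K)$ on the semilattice of finite unions of left derivatives of $L$. *)

From Stdlib Require Import ClassicalEpsilon.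
From mathcomp Require Import all_boot.
Set Implicit Arguments. Unset Strict Implicit. Unset Printing Implicit Defensive.

Definition lang (S : finType) := seq S -> Prop.

(* Least natural number satisfying P (0 if none; classical choice). *)
Definition pdec (P : nat -> Prop) (n : nat) : bool :=
  if excluded_middle_informative (P n) then true else false.

Lemma pdec_ex (P : nat -> Prop) : (exists n, P n) -> exists n, pdec P n.
Proof.
case=> n Pn; exists n; rewrite /pdec.
by case: (excluded_middle_informative (P n)).
Qed.

Definition least_nat (P : nat -> Prop) : nat :=
  match excluded_middle_informative (exists n, P n) with
  | left h => ex_minn (pdec_ex h)
  | right _ => 0
  end.

Record nfa (S : finType) (n : nat) := Nfa {
  nfa_init : {set 'I_n};
  nfa_final : {set 'I_n};
  nfa_trans : S -> 'I_n -> {set 'I_n}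
}.

Fixpoint nfa_reach (S : finType) n (A : nfa S n) (X : {set 'I_n}) (w : seq S)
  : {set 'I_n} :=
  match w with
  | [::] => X
  | a :: w' => nfa_reach A (\bigcup_(q in X) nfa_trans A a q) w'
  end.

Definition nfa_state_acc (S : finType) n (A : nfa S n) (q : 'I_n) : lang S :=
  fun w => [exists p in nfa_reach A [set q] w, p \in nfa_final A].

Definition nfa_lang (S : finType) n (A : nfa S n) : lang S :=
  fun w => exists2 q, q \in nfa_init A & nfa_state_acc A q w.

Definition accepts (S : finType) n (A : nfa S n) (L : lang S) : Prop :=
  forall w, nfa_lang A w <-> L w.

Definition regular (S : finType) (L : lang S) : Prop :=
  exists n (A : nfa S n), accepts A L.

Definition two_sided_deriv (S : finType) (L : lang S) (u v : seq S) : lang S :=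
  fun w => L (u ++ w ++ v).

Definition is_two_sided_deriv (S : finType) (L : lang S) (K : lang S) : Prop :=
  exists u v, forall w, K w <-> two_sided_deriv L u v w.

(* boolean subalgebra of P(S^* ) generated by a family G of languages
   (languages identified extensionally) *)
Inductive in_bool_alg (S : finType) (G : lang S -> Prop) : lang S -> Prop :=
| ba_gen K : G K -> in_bool_alg G K
| ba_full : in_bool_alg G (fun _ => True)
| ba_compl K : in_bool_alg G K -> in_bool_alg G (fun w => ~ K w)
| ba_union K1 K2 : in_bool_alg G K1 -> in_bool_alg G K2 ->
    in_bool_alg G (fun w => K1 w \/ K2 w)
| ba_ext K K' : in_bool_alg G K -> (forall w, K w <-> K' w) -> in_bool_alg G K'.

Definition subatomic (S : finType) (L : lang S) n (A : nfa S n) : Prop :=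
  forall q : 'I_n, in_bool_alg (is_two_sided_deriv L) (nfa_state_acc A q).

Definition ns (S : finType) (L : lang S) : nat :=
  least_nat (fun n => exists A : nfa S n, accepts A L).

Definition nsyn (S : finType) (L : lang S) : nat :=
  least_nat (fun n => exists A : nfa S n, accepts A L /\ subatomic L A).

From Stdlib Require Import ClassicalEpsilon.
From mathcomp Require Import all_boot zify.
Set Implicit Arguments. Unset Strict Implicit. Unset Printing Implicit Defensive.

(* Let A be an nfa with n = ns(L) states accepting L, viewed as a set of
   lengths.  Pigeonhole arguments on walks of A give two facts: every
   accepted length k >= n lies on an infinite arithmetic progression of
   accepted lengths with difference e <= n (acc_len_pump), and beyond the
   threshold thr n = n^2 + n the length set is periodic of period n!
   (acc_len_period).  From these two facts alone (section TailStructure):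
   a length thr n + x is accepted iff for some e <= n all lengths beyond the
   threshold congruent to thr n + x modulo e are accepted (mem_len_tail), and
   each such "tail class" is a finite intersection of left derivatives of L
   (tail_classE).  Hence the automaton made of a chain of thr n states
   followed by one cycle of length e for each e <= n accepts L, and every
   state accepts a boolean combination of derivatives: it is subatomic with
   thr n + n^2 <= 3 n^2 states. *)

(* The threshold beyond which the length set of an n-state unary nfa is
   periodic. *)
Definition thr (n : nat) : nat := n * n + n.

Section UnaryPaths.
Variables (n : nat) (A : nfa unit n).

Fixpoint upath (x : 'I_n) (k : nat) (y : 'I_n) : Prop :=
  if k is k'.+1 then exists2 x', x' \in nfa_trans A tt x & upath x' k' y
  else y = x.

Definition acc_from (x : 'I_n) (k : nat) : Prop :=
  exists2 y, upath x k y & y \in nfa_final A.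

Definition acc_len (k : nat) : Prop :=
  exists2 x, x \in nfa_init A & acc_from x k.

Lemma reach_acc (X : {set 'I_n}) (w : seq unit) :
  [exists p in nfa_reach A X w, p \in nfa_final A] <->
  exists2 x, x \in X & acc_from x (size w).
Proof.
elim: w X => [|[] w IH] X /=.
  split; first by case/exists_inP=> p pX pF; exists p => //; exists p.
  by case=> x xX [y /= -> yF]; apply/exists_inP; exists x.
rewrite IH; split.
  case=> x' /bigcupP [q qX xq] [y Ry yF].
  by exists q => //; exists y => //; exists x'.
case=> q qX [y [x' xq Ry] yF].
by exists x'; [apply/bigcupP; exists q | exists y].
Qed.

Lemma state_acc (q : 'I_n) (w : seq unit) :
  nfa_state_acc A q w <-> acc_from q (size w).
Proof.
rewrite /nfa_state_acc reach_acc; split; first by case=> x /set1P ->.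
by move=> h; exists q; rewrite ?inE.
Qed.

Lemma lang_acc (w : seq unit) : nfa_lang A w <-> acc_len (size w).
Proof. by split; case=> q qI /state_acc h; exists q. Qed.

Lemma upath_add a b x z :
  upath x (a + b) z <-> exists y, upath x a y /\ upath y b z.
Proof.
elim: a x => [|a IH] x /=; first by split; [exists x | case=> y [-> ]].
split; first by case=> x' xx /IH [y [h1 h2]]; exists y; split => //; exists x'.
by case=> y [[x' xx h1] h2]; exists x' => //; apply/IH; exists y.
Qed.

Lemma upath_iter c e M z q :
  upath c e c -> upath c M z -> upath c (q * e + M) z.
Proof.
move=> ce cM; elim: q => [|q IH] //.
by rewrite mulSn -addnA; apply/upath_add; exists c.
Qed.

Lemma upath_walk K x z : upath x K z ->
  exists s : nat -> 'I_n, [/\ s 0 = x, s K = z &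
     forall i j, i <= j -> j <= K -> upath (s i) (j - i) (s j)].
Proof.
elim: K x => [|K IH] x /= => [->|[x' xx /IH [s [s0 sK sij]]]].
  exists (fun _ => x); split => // i j ij; rewrite leqn0 => /eqP j0.
  by move: ij; rewrite j0 leqn0 => /eqP ->.
exists (fun m => if m is m'.+1 then s m' else x); split => //.
case=> [|i] [|j] //= ij jK; last exact: sij.
by exists x' => //; move: (sij 0 j (leq0n _) jK); rewrite s0 subn0.
Qed.

(* Pigeonhole along a walk: among the first n * #|T| + 1 positions of a walk,
   two positions carry the same state and the same label. *)
Lemma upath_loop (T : finType) (lab : nat -> T) M x z :
  n * #|T| <= M -> upath x M z ->
  exists i j c, [/\ i < j <= n * #|T|, lab i = lab j,
    upath x i c, upath c (j - i) c & upath c (M - j) z].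
Proof.
move=> NM /upath_walk [s [s0 sM sij]].
pose f (i : 'I_(n * #|T|).+1) := (s i, lab i).
have /injectivePn [i [j neq_ij eq_f]] : ~~ injectiveb f.
  by apply/injectiveP => /leq_card; rewrite card_prod !card_ord ltnn.
wlog lt_ij : i j neq_ij eq_f / i < j.
  move=> gen; case: (ltngtP i j) => [|lt_ji|/val_inj eq_ij]; first exact: gen.
    by apply: (gen j i) => //; rewrite eq_sym.
  by rewrite eq_ij eqxx in neq_ij.
case: eq_f => eq_s eq_lab.
have jN : j <= n * #|T| by rewrite -ltnS.
have jM : j <= M := leq_trans jN NM.
exists i, j, (s i); split; rewrite ?lt_ij //.
- by move: (sij 0 i (leq0n _) (leq_trans (ltnW lt_ij) jM)); rewrite s0 subn0.
- by rewrite {2}eq_s; apply: sij (ltnW lt_ij) jM.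
- by rewrite eq_s -sM; apply: sij jM _.
Qed.

(* A walk of length M >= n * e can be shortened by a positive multiple d of e,
   with d <= n * e: cut it between two positions with equal state and equal
   residue modulo e. *)
Lemma upath_cut e M x z : 0 < e -> n * e <= M -> upath x M z ->
  exists d, [/\ 0 < d <= n * e, e %| d & upath x (M - d) z].
Proof.
move=> e0 eM R.
pose lab (i : nat) : 'I_e := Ordinal (ltn_pmod i e0).
have [|i [j [c [/andP [lt_ij jN] [eq_lab] Rx _ Rz]]]] := upath_loop lab _ R.
  by rewrite card_ord.
rewrite card_ord in jN; exists (j - i); split.
- by rewrite subn_gt0 lt_ij; apply: leq_trans (leq_subr _ _) jN.
- by rewrite -eqn_mod_dvd ?eq_lab // ltnW.
- have -> : M - (j - i) = i + (M - j) by move: (leq_trans jN eM); lia.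
  by apply/upath_add; exists c.
Qed.

(* In presence of a loop of length e at c, any multiple m of e can be removed
   from a long enough walk starting at c: cut repeatedly with upath_cut, and
   pump the loop back if a cut overshoots. *)
Lemma upath_drop c e z m M : 0 < e -> upath c e c -> e %| m ->
  n * e + m <= M -> upath c M z -> upath c (M - m) z.
Proof.
move=> e0 ce; elim/ltn_ind: m M => m IH M dm mM R.
have [->|m0] := posnP m; first by rewrite subn0.
have [d [/andP [d0 dne] dd R']] := upath_cut e0 (leq_trans (leq_addr _ _) mM) R.
have [dm'|md] := leqP d m.
  have lt_m : m - d < m by lia.
  have le_M : n * e + (m - d) <= M - d by lia.
  have := IH _ lt_m _ (dvdn_sub dm dd) le_M R'.
  by have -> : M - d - (m - d) = M - m by lia.
have := upath_iter ((d - m) %/ e) ce R'.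
by rewrite divnK ?dvdn_sub //; have -> : d - m + (M - d) = M - m by lia.
Qed.

Lemma acc_len_pump k : n <= k -> acc_len k ->
  exists2 e, 0 < e <= n & forall q, acc_len (k + q * e).
Proof.
move=> nk [x xI [z R zF]].
have [|i [j [c [/andP [lt_ij jN] _ Rx Rc Rz]]]] := upath_loop (fun _ => tt) _ R.
  by rewrite card_unit muln1.
rewrite card_unit muln1 in jN.
exists (j - i); first by rewrite subn_gt0 lt_ij; lia.
move=> q; exists x => //; exists z => //.
have -> : k + q * (j - i) = i + (q.+1 * (j - i) + (k - j)).
  by move: (leq_trans jN nk); lia.
by apply/upath_add; exists c; split => //; apply: upath_iter.
Qed.

(* Beyond the threshold, acceptance is periodic of period n!: a walk of
   length k + n! contains a loop of length e <= n early on, which lets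
   upath_drop remove n!. *)
Lemma acc_len_period k : thr n <= k -> acc_len k <-> acc_len (k + n`!).
Proof.
rewrite /thr => nk; split.
  case/acc_len_pump => [|e /andP [e0 en] H]; first lia.
  by move: (H (n`! %/ e)); rewrite divnK // dvdn_fact // e0.
case=> x xI [z R zF].
have [|i [j [c [/andP [lt_ij jN] _ Rx Rc Rz]]]] := upath_loop (fun _ => tt) _ R.
  by rewrite card_unit muln1; lia.
rewrite card_unit muln1 in jN.
have e0 : 0 < j - i by rewrite subn_gt0.
have en : n * (j - i) <= n * n by rewrite leq_mul2l; apply/orP; right; lia.
have Rz' : upath c (1 * (j - i) + (k + n`! - j) - n`!) z.
  apply: (upath_drop e0 Rc _ _ (upath_iter 1 Rc Rz)); last lia.
  by apply: dvdn_fact; rewrite e0; lia.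
exists x => //; exists z => //.
have -> : k = i + (1 * (j - i) + (k + n`! - j) - n`!) by lia.
by apply/upath_add; exists c.
Qed.

Lemma acc_from_char (Phi : 'I_n -> nat -> Prop) :
  (forall q, Phi q 0 <-> q \in nfa_final A) ->
  (forall q k, Phi q k.+1 <-> exists2 q', q' \in nfa_trans A tt q & Phi q' k) ->
  forall q k, acc_from q k <-> Phi q k.
Proof.
move=> Phi0 PhiS q k; elim: k q => [|k IH] q.
  by rewrite Phi0; split; [case=> y /= -> | exists q].
rewrite PhiS; split.
  by case=> y [q' qq' R] yF; exists q' => //; apply/IH; exists y.
by case=> q' qq' /IH [y R yF]; exists y => //; exists q'.
Qed.

End UnaryPaths.

Lemma bool_alg_inter (S : finType) (G : lang S -> Prop) (K1 K2 : lang S) :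
  in_bool_alg G K1 -> in_bool_alg G K2 -> in_bool_alg G (fun w => K1 w /\ K2 w).
Proof.
move=> h1 h2; apply: ba_ext (ba_compl (ba_union (ba_compl h1) (ba_compl h2))) _.
by move=> w; split; [move=> h; split; apply: NNPP => ?; apply: h; tauto | tauto].
Qed.

Lemma bool_alg_bigcap (S : finType) (G : lang S -> Prop) (K : nat -> lang S) N :
  (forall i, i < N -> in_bool_alg G (K i)) ->
  in_bool_alg G (fun w => forall i, i < N -> K i w).
Proof.
elim: N => [|N IH] hK; first by apply: ba_ext (ba_full _) _.
apply: ba_ext (bool_alg_inter (IH _) (hK N _)) _ => [i iN||w]; rewrite ?ltnSn //.
  by apply: hK; apply: ltnW.
split=> [[h hN] i|h]; last by split=> [i iN|]; apply: h; rewrite // ltnW.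
by rewrite ltnS leq_eqVlt => /orP [/eqP ->|]; [| apply: h].
Qed.

Lemma pdecP (P : nat -> Prop) k : pdec P k <-> P k.
Proof. by rewrite /pdec; case: excluded_middle_informative. Qed.

Lemma least_natP (P : nat -> Prop) : (exists n, P n) -> P (least_nat P).
Proof.
move=> exP; rewrite /least_nat; case: excluded_middle_informative => // exP'.
by case: ex_minnP => m /pdecP.
Qed.

Lemma least_nat_le (P : nat -> Prop) m : P m -> least_nat P <= m.
Proof.
move=> Pm; rewrite /least_nat; case: excluded_middle_informative => [exP|[]].
  by case: ex_minnP => k _; apply; apply/pdecP.
by exists m.
Qed.

Definition nfa_of (Q : finType) (init fin : {set Q}) (tr : Q -> {set Q}) :
    nfa unit #|Q| :=
  Nfa [set i | enum_val i \in init] [set i | enum_val i \in fin]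
      (fun _ i => [set j | enum_val j \in tr (enum_val i)]).

Section NfaOf.
Variables (Q : finType) (init fin : {set Q}) (tr : Q -> {set Q}).
Variable Phi : Q -> nat -> Prop.
Hypothesis Phi0 : forall q, Phi q 0 <-> q \in fin.
Hypothesis PhiS : forall q k, Phi q k.+1 <-> exists2 q', q' \in tr q & Phi q' k.

Lemma nfa_of_state i w :
  nfa_state_acc (nfa_of init fin tr) i w <-> Phi (enum_val i) (size w).
Proof.
rewrite state_acc; apply: (acc_from_char (Phi := fun i => Phi (enum_val i))).
  by move=> j; rewrite Phi0 inE.
move=> j k; rewrite PhiS; split=> [[q qj Pq]|[j' jj' Pj']].
  by exists (enum_rank q); rewrite ?inE enum_rankK.
by exists (enum_val j'); rewrite // inE in jj'.
Qed.

Lemma nfa_of_lang w :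
  nfa_lang (nfa_of init fin tr) w <-> exists2 q, q \in init & Phi q (size w).
Proof.
split=> [[i iI /nfa_of_state Pi]|[q qI Pq]].
  by exists (enum_val i); rewrite // inE in iI.
by exists (enum_rank q); rewrite ?inE ?enum_rankK // nfa_of_state enum_rankK.
Qed.

End NfaOf.

Definition mem_len (L : lang unit) (k : nat) : Prop := L (nseq k tt).

Lemma unit_word (w : seq unit) : w = nseq (size w) tt.
Proof. by elim: w => [|[] w IH] //=; rewrite -IH. Qed.

(* Left derivatives of a unary language are shifts of its length set. *)
Lemma shift_deriv (L : lang unit) a :
  in_bool_alg (is_two_sided_deriv L) (fun w => mem_len L (a + size w)).
Proof.
apply: ba_gen; exists (nseq a tt), [::] => w.
by rewrite /two_sided_deriv cats0 /mem_len nseqD -unit_word.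
Qed.

Lemma accepts_mem_len n (A : nfa unit n) (L : lang unit) :
  accepts A L -> forall k, mem_len L k <-> acc_len A k.
Proof. by move=> acc k; rewrite /mem_len -acc lang_acc size_nseq. Qed.

Lemma residue_rep N e y k : 0 < N -> 0 < e -> e %| N -> k = y %[mod e] ->
  exists2 i, i < N %/ e & y + i * e = k %[mod N].
Proof.
move=> N0 e0 eN kye; set r := k + N.-1 * y.
have yNy : y + N.-1 * y = N * y by rewrite -{1}[y]mul1n -mulnDl add1n prednK.
have er : e %| r.
  by rewrite /dvdn /r -modnDml kye modnDml yNy -/(dvdn e (N * y)) dvdn_mulr.
exists ((r %/ e) %% (N %/ e)); first by rewrite ltn_pmod // divn_gt0 // dvdn_leq.
rewrite muln_modl !divnK // modnDmr addnC /r -addnA [_ + y]addnC yNy.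
by rewrite addnC mulnC modnMDl.
Qed.

Section TailStructure.
Variables (L : lang unit) (n : nat).

(* The two properties of the length set of L inherited from an n-state nfa. *)
Hypothesis pump_L : forall k, n <= k -> mem_len L k ->
  exists2 e, 0 < e <= n & forall q, mem_len L (k + q * e).
Hypothesis period_L : forall k, thr n <= k ->
  mem_len L k <-> mem_len L (k + n`!).

Lemma period_mod k k' : thr n <= k -> thr n <= k' -> k = k' %[mod n`!] ->
  mem_len L k <-> mem_len L k'.
Proof.
wlog le_kk' : k k' / k <= k' => [gen|Tk Tk' /eqP kk'].
  move=> Tk Tk' kk'; case: (leqP k k') => [|/ltnW] le; first exact: gen.
  by symmetry; apply: gen.
rewrite eq_sym eqn_mod_dvd // in kk'.
rewrite -(subnKC le_kk') -(divnK kk'); elim: (_ %/ _) => [|m IH].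
  by rewrite addn0.
by rewrite IH mulSn (addnC n`!) addnA period_L // (leq_trans Tk) // leq_addr.
Qed.

Definition tail_class (e y : nat) : Prop :=
  forall k, thr n <= k -> k = thr n + y %[mod e] -> mem_len L k.

Lemma tail_class_mod e y y' : y = y' %[mod e] ->
  tail_class e y <-> tail_class e y'.
Proof. by move=> yy'; rewrite /tail_class -modnDmr yy' modnDmr. Qed.

(* By periodicity, a tail class is decided by finitely many lengths. *)
Lemma tail_classE e y : 0 < e <= n -> tail_class e y <->
  forall i, i < n`! %/ e -> mem_len L (thr n + y + i * e).
Proof.
move=> /andP [e0 en]; split=> [cls i _|fin k Tk ky].
  by apply: cls; [rewrite -addnA leq_addr | rewrite addnC modnMDl].
have e_fact : e %| n`! by rewrite dvdn_fact // e0.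
have [i lt_i eq_i] := residue_rep (fact_gt0 n) e0 e_fact ky.
by apply/(period_mod _ Tk eq_i); [rewrite -addnA leq_addr | apply: fin].
Qed.

Lemma mem_len_tail x :
  mem_len L (thr n + x) <-> exists2 e, 0 < e <= n & tail_class e x.
Proof.
split=> [Lx|[e _]]; last by apply; rewrite ?leq_addr.
have [|e /andP [e0 en] prog] := pump_L _ Lx; first by rewrite /thr; lia.
exists e; first by rewrite e0.
move=> k Tk ky; have e_fact : e %| n`! by rewrite dvdn_fact // e0.
have [i _ eq_i] := residue_rep (fact_gt0 n) e0 e_fact ky.
by apply/(period_mod _ Tk eq_i); [rewrite -addnA leq_addr | apply: prog].
Qed.

(* The automaton: a chain of thr n states reading the non-periodic prefix,
   followed by one cycle of length e for every period e <= n. *)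
Definition tail_state : finType := ('I_(thr n) + 'I_n * 'I_n)%type.

(* The language (as a set of lengths) the automaton accepts from each state:
   chain state i accepts the shift of L by i, cycle state (e-1, r) accepts
   the tail class of residue r modulo e. *)
Definition state_lang (q : tail_state) (x : nat) : Prop :=
  match q with
  | inl i => mem_len L (i + x)
  | inr (e', r) => tail_class e'.+1 (r + x)
  end.

Definition tail_step (q : tail_state) : {set tail_state} :=
  match q with
  | inl i => [set q' : tail_state | match q' with
                 | inl j => val j == i.+1
                 | inr (_, r) => (i.+1 == thr n) && (val r == 0) end]
  | inr (e', r) => [set q' : tail_state | match q' with
                 | inl _ => false
                 | inr (e'', r') => (e'' == e') && (val r' == r.+1 %% e'.+1) end]
  end.

(* state_lang obeys the recursion of acceptance in the automaton; at the end
   of the chain this is the dichotomy mem_len_tail. *)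
Lemma state_lang_step q x :
  state_lang q x.+1 <-> exists2 q', q' \in tail_step q & state_lang q' x.
Proof.
case: q => [i|[e' r]] /=.
  have [lt_iT|ge_iT] := ltnP i.+1 (thr n).
    rewrite -addSnnS; split=> [Lx|[[j|[e'' r]]]]; rewrite ?inE //=.
      by exists (inl (Ordinal lt_iT)); rewrite ?inE.
    - by move=> /eqP ->.
    - by rewrite ltn_eqF.
  have iT : i.+1 = thr n by apply/eqP; rewrite eqn_leq ge_iT ltn_ord.
  rewrite -addSnnS iT mem_len_tail; split=> [[e /andP [e0 en] cls]|].
    have e'n : e.-1 < n by rewrite prednK.
    exists (inr (Ordinal e'n, Ordinal (leq_trans e0 en))); first by rewrite inE /= eqxx.
    by rewrite /= prednK.
  case=> [[j|[e'' r]]]; rewrite inE /=.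
    by move=> /eqP eq_j; have := ltn_ord j; rewrite eq_j ltnn.
  by rewrite eqxx => /eqP -> cls; exists e''.+1; rewrite ?ltn_ord.
have rn : r.+1 %% e'.+1 < n by apply: leq_trans (ltn_pmod _ _) (ltn_ord e').
have step_mod (r' : 'I_n) : val r' = r.+1 %% e'.+1 ->
    tail_class e'.+1 (r' + x) <-> tail_class e'.+1 (r + x.+1).
  by move=> ->; apply: tail_class_mod; rewrite modnDml addSnnS.
split=> [cls|[[j|[e'' r']]]]; rewrite ?inE //=.
  by exists (inr (e', Ordinal rn)); rewrite ?inE ?eqxx //; apply/(step_mod (Ordinal rn)).
case/andP=> /eqP -> /eqP eq_r'.
by rewrite -(step_mod r').
Qed.

(* Every state language lies in the boolean algebra of two-sided derivatives:
   chain states give derivatives, cycle states finite intersections of them. *)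
Lemma state_lang_alg q :
  in_bool_alg (is_two_sided_deriv L) (fun w => state_lang q (size w)).
Proof.
case: q => [i|[e' r]] /=; first exact: shift_deriv.
set a := n`! %/ e'.+1.
have := @bool_alg_bigcap _ _ _ a (fun i _ => shift_deriv L (thr n + r + i * e'.+1)).
move/ba_ext; apply=> w; rewrite tail_classE ?ltn_ord //.
have eq_len i : thr n + r + i * e'.+1 + size w = thr n + (r + size w) + i * e'.+1.
  by lia.
by split=> h i /h; rewrite eq_len.
Qed.

Definition tail_nfa : nfa unit #|tail_state| :=
  nfa_of [set q : tail_state | if q is inl i then val i == 0 else false]
         [set q | pdec (state_lang q) 0] tail_step.

Lemma tail_nfa_state i w :
  nfa_state_acc tail_nfa i w <-> state_lang (enum_val i) (size w).
Proof. by apply: nfa_of_state => [q|]; [rewrite inE pdecP | exact: state_lang_step]. Qed.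

Lemma tail_nfa_accepts : accepts tail_nfa L.
Proof.
move=> w; rewrite /tail_nfa nfa_of_lang => [|q|]; last exact: state_lang_step.
  rewrite [L w](_ : _ = mem_len L (size w)); last by rewrite /mem_len -unit_word.
  split=> [[[i|q]]|Lw]; rewrite ?inE //=; first by move=> /eqP ->.
  have T0 : 0 < thr n.
    have [n0|] := posnP n; last by rewrite /thr; lia.
    by have [|e] := pump_L _ Lw; rewrite n0 //; lia.
  by exists (inl (Ordinal T0)); rewrite ?inE.
by rewrite inE pdecP.
Qed.

Lemma tail_nfa_subatomic : subatomic L tail_nfa.
Proof.
move=> i; apply: ba_ext (state_lang_alg (enum_val i)) _ => w.
by rewrite tail_nfa_state.
Qed.

Lemma nsyn_tail_bound : nsyn L <= thr n + n * n.
Proof.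
have <- : #|tail_state| = thr n + n * n by rewrite card_sum card_prod !card_ord.
apply: least_nat_le; exists tail_nfa.
by split; [exact: tail_nfa_accepts | exact: tail_nfa_subatomic].
Qed.

End TailStructure.

Lemma nsyn_le_ns (L : lang unit) : regular L -> nsyn L <= 3 * ns L ^ 2.
Proof.
move=> reg; set n := ns L.
have [A accA] : exists A : nfa unit n, accepts A L.
  exact: (@least_natP (fun m => exists A : nfa unit m, accepts A L) reg).
have memA := accepts_mem_len accA.
have pump_L k : n <= k -> mem_len L k ->
    exists2 e, 0 < e <= n & forall q, mem_len L (k + q * e).
  by move=> nk /memA /(acc_len_pump nk) [e en prog]; exists e => // q; apply/memA.
have period_L k : thr n <= k -> mem_len L k <-> mem_len L (k + n`!).
  by move=> Tk; rewrite !memA; apply: acc_len_period.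
by apply: leq_trans (nsyn_tail_bound pump_L period_L) _; rewrite /thr; nia.
Qed.

(* The unary alphabet {a} is modelled by the one-element type unit. *)
Theorem corollary5p4 :
  exists C : nat, forall L : lang unit, regular L -> nsyn L <= C * ns L ^ 2.
Proof. by exists 3; exact: nsyn_le_ns. Qed.
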